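(* Let $\mathbb Q$ be a probability measure on $(\Omega,\mathcal F)$ equivalent to $\mathbb P$, and let $(\mathcal B_n)_{n\in\mathbb N_0}$ be $\sigma$-subfields. Then $\mathcal B_n\to\mathcal B_0$ weakly under $\mathbb P$ if and only if $\mathcal B_n\to\mathcal B_0$ weakly under $\mathbb Q$.
   Context: Let $(\Omega,\mathcal F,\mathbb P)$ be a (not necessarily complete) probability space and $\mathcal N:=\{F\in\mathcal F:\mathbb P(F)=0\}$. A $\sigma$-subfield is a sub-$\sigma$-field $\mathcal A\subset\mathcal F$ with $\mathcal A=\sigma(\mathcal A\cup\mathcal N)$ (this notion is the same for $\mathbb P$ and any $\mathbb Q\sim\mathbb P$). For a probability measure $\mathbb R\sim\mathbb P$ and a $\sigma$-subfield $\mathcal A$, $\mathbb R_{\mathcal A}f:=\mathbb E^{\mathbb R}[f\mid\mathcal A]$. We say $\mathcal B_n\to\mathcal B_0$ weakly under $\mathbb R$ if $\mathbb R_{\mathcal B_n}\mathbb 1_A\to\mathbb 1_A$ in $\mathbb R$-probability for every $A\in\mathcal B_0$. *)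

From HB Require Import structures.
From mathcomp Require Import all_boot all_order all_algebra.
From mathcomp Require Import all_classical all_reals all_analysis.
Set Implicit Arguments. Unset Strict Implicit. Unset Printing Implicit Defensive.
Import Order.TTheory GRing.Theory Num.Theory.
Import numFieldNormedType.Exports.
Local Open Scope classical_set_scope.
Local Open Scope ring_scope.

Section Defs.
Context {d : measure_display} {T : measurableType d} {R : realType}.

Definition null_sets (P : probability T R) : set (set T) :=
  [set F | measurable F /\ P F = 0%E].

Definition equiv_prob (P Q : probability T R) : Prop :=
  forall F, measurable F -> (P F = 0%E <-> Q F = 0%E).

Definition sigma_subfield (P : probability T R) (A : set (set T)) : Prop :=
  [/\ sigma_algebra setT A, A `<=` measurable
    & A = <<s A `|` null_sets P >>].

Definition sub_measurable (A : set (set T)) (g : T -> R) : Prop :=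
  forall B : set R, measurable B -> A (g @^-1` B).

Definition cond_exp_version (Q : probability T R) (A : set (set T))
    (f g : T -> R) : Prop :=
  [/\ sub_measurable A g, Q.-integrable setT (EFin \o g)
    & forall B, A B ->
        (\int[Q]_(x in B) (g x)%:E = \int[Q]_(x in B) (f x)%:E)%E].

Definition cvg_in_prob (Q : probability T R) (g : nat -> T -> R) (f : T -> R)
  : Prop :=
  forall eps : R, 0 < eps ->
    (fun n => Q [set x | eps <= `|g n x - f x|]) @ \oo --> 0%E.

Definition weak_cvg_sf (Q : probability T R) (B : nat -> set (set T)) : Prop :=
  forall A, B 0%N A ->
    forall g : nat -> T -> R,
      (forall n, cond_exp_version Q (B n) (\1_A) (g n)) ->
      cvg_in_prob Q g (\1_A).

End Defs.

(* If [h n] is a version of E^P[1_A | B n], the set [C n := {h n > 1/2}] lies in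
   [B n] and [A `+` C n] is contained in [{|h n - 1_A| >= 1/2}], so weak convergence
   under P forces [P (A `+` C n) -> 0].  Conversely, Markov's inequality on the
   [B n]-sets [{g - 1_C >= eps}] and [{1_C - g >= eps}] shows that every version [g]
   of E^Q[1_A | B n] satisfies
   [Q {|g - 1_A| >= eps} <= (2 + eps) / eps * Q (A `+` C)] for any [C] in [B n].
   Since [Q << P] between finite measures has an eps-delta form (Borel-Cantelli),
   [Q (A `+` C n) -> 0] as well; versions exist by Radon-Nikodym on the trace
   sigma-algebra, and the situation is symmetric in P and Q. *)

From HB Require Import structures.
From mathcomp Require Import all_boot all_order all_algebra.
From mathcomp Require Import all_classical all_reals all_analysis.
From mathcomp Require Import measurable_realfun lra.
Set Implicit Arguments. Unset Strict Implicit. Unset Printing Implicit Defensive.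
Import Order.TTheory GRing.Theory Num.Theory.
Import numFieldNormedType.Exports.
Local Open Scope classical_set_scope.
Local Open Scope ring_scope.

Section sub_measurable.
Context d (T : measurableType d) (R : realType) (G : set (set T)).

Lemma sub_measurable_measurable (f : T -> R) : G `<=` measurable ->
  sub_measurable G f -> measurable_fun setT f.
Proof. by move=> HG Gf _ B mB; rewrite setTI; apply: HG; exact: Gf. Qed.

Lemma measurable_norm_ge (f : T -> R) (eps : R) : measurable_fun setT f ->
  measurable [set x | eps <= `|f x|].
Proof.
move=> mf; rewrite -[X in measurable X]setTI.
rewrite (_ : [set x | _] = (fun x => `|f x|) @^-1` `[eps, +oo[); last first.
  by apply/seteqP; split=> x /=; rewrite in_itv /= andbT.
by apply: measurableT_comp mf measurableT _ (measurable_itv _); exact: normr_measurable.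
Qed.

Hypothesis sG : sigma_algebra setT G.

Lemma sub_measurableP (f : T -> R) :
  sub_measurable G f <-> measurable_fun (setT : set (g_sigma_algebraType G)) f.
Proof.
split=> [Gf _ B mB|mf B mB].
- by rewrite setTI measurable_g_measurableTypeE //; exact: Gf.
- by rewrite -(measurable_g_measurableTypeE sG) -[_ @^-1` _]setTI; exact: mf.
Qed.

Lemma sub_measurable_indic (C : set T) : G C -> sub_measurable G (\1_C : T -> R).
Proof.
move=> GC; apply/sub_measurableP; apply: measurable_indic.
by rewrite measurable_g_measurableTypeE.
Qed.

Lemma sub_measurableB (f g : T -> R) :
  sub_measurable G f -> sub_measurable G g -> sub_measurable G (f \- g).
Proof.
by move=> /sub_measurableP mf /sub_measurableP mg; exact/sub_measurableP/measurable_funB.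
Qed.

End sub_measurable.

Section cond_exp_indic_exists.
Context d (T : measurableType d) (R : realType) (P : probability T R).
Variables (G : set (set T)) (HG : G `<=` measurable) (sG : sigma_algebra setT G).
Variables (A : set T) (mA : measurable A).

Local Notation TG := (g_sigma_algebraType G).

Let measurable_TG (C : set TG) : measurable C -> measurable (C : set T).
Proof. by rewrite measurable_g_measurableTypeE //; exact: HG. Qed.

Let idG : T -> TG := id.

Let measurable_idG : measurable_fun setT idG.
Proof. by move=> _ B mB; rewrite setTI; exact: measurable_TG. Qed.

HB.instance Definition _ := isMeasurableFun.Build _ _ _ _ idG measurable_idG.

(* [P] and [P (A `&` _)] restricted to [G]: their Radon-Nikodym derivative is a version
   of E^P[1_A | G]. *)
Let PG := distribution P idG.

Let NG (C : set TG) := P (A `&` C).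

Let measurable_setIA (C : set TG) : measurable C -> measurable (A `&` C).
Proof. by move=> mC; apply: measurableI => //; exact: measurable_TG. Qed.

Let NG0 : NG set0 = 0%E. Proof. by rewrite /NG setI0 measure0. Qed.
Let NG_ge0 C : (0 <= NG C)%E. Proof. exact: measure_ge0. Qed.
Let NG_sigma_additive : semi_sigma_additive NG.
Proof.
move=> F mF tF mU; rewrite /NG setI_bigcupr.
apply: measure_semi_sigma_additive.
- by move=> n; exact: measurable_setIA.
- apply/trivIsetP => i j _ _ ij; rewrite setIACA setIid.
  by move/trivIsetP : tF => /(_ i j I I ij) ->; rewrite setI0.
- by rewrite -setI_bigcupr; exact: measurable_setIA.
Qed.
HB.instance Definition _ := isMeasure.Build _ _ _ NG NG0 NG_ge0 NG_sigma_additive.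

Let NG_fin : fin_num_fun NG.
Proof. by move=> C mC; rewrite fin_num_measure //; exact: measurable_setIA. Qed.
HB.instance Definition _ := Measure_isFinite.Build _ _ _ NG NG_fin.

Let NG_dominated : charge_of_finite_measure NG `<< PG.
Proof.
apply/null_content_dominatesP => C mC PC0; apply/eqP.
rewrite eq_le measure_ge0 andbT -PC0 /= /charge_of_finite_measure /NG.
apply: le_measure; rewrite ?inE.
- exact: measurable_setIA.
- exact: measurable_TG.
- exact: subIsetr.
Qed.

Lemma cond_exp_indic_exists : exists g : T -> R, cond_exp_version P G (\1_A) g.
Proof.
pose f := Radon_Nikodym (charge_of_finite_measure NG) PG.
have fE x : (fine (f x))%:E = f x by rewrite fineK // Radon_Nikodym_fin_num.
have fineE : EFin \o (fine \o f) = f by apply/funext => x; exact: fE.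
have intf : PG.-integrable setT f := Radon_Nikodym_integrable NG_dominated.
have mf : measurable_fun setT f := measurable_int _ intf.
have intPf : P.-integrable setT f.
  apply/integrableP; split; first exact: measurableT_comp mf measurable_idG.
  move/integrableP : intf => [_]; rewrite ge0_integral_pushforward //.
  exact: measurableT_comp.
exists (fine \o f); split.
- by apply/sub_measurableP => //; apply/measurable_EFinP; rewrite fineE.
- by rewrite fineE.
- move=> B GB; have mB : measurable (B : set TG) by rewrite measurable_g_measurableTypeE.
  under eq_integral do rewrite /= fE.
  rewrite integral_indic //; last exact: HG.
  rewrite -[RHS]/(NG B) (Radon_Nikodym_integral NG_dominated mB) integral_pushforward //.
  by apply: integrableS intPf => //; exact: HG.
Qed.

End cond_exp_indic_exists.

Section level_set_bound.
Context d (T : measurableType d) (R : realType) (P : probability T R).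
Variables (G : set (set T)) (HG : G `<=` measurable).

Lemma le_measure_level_setD (f1 f2 : T -> R) (X Y : set T) (eps : R) :
  0 < eps -> measurable X -> measurable Y -> sub_measurable G (f1 \- f2) ->
  P.-integrable setT (EFin \o f1) -> P.-integrable setT (EFin \o f2) ->
  (forall E, G E -> \int[P]_(x in E) (f1 x)%:E = P (X `&` E))%E ->
  (forall E, G E -> \int[P]_(x in E) (f2 x)%:E = P (Y `&` E))%E ->
  (eps%:E * P ((f1 \- f2)%R @^-1` `[eps, +oo[) <= P (X `\` Y))%E.
Proof.
move=> e0 mX mY Gf if1 if2 hf1 hf2; set E := _ @^-1` _.
have GE : G E by apply: Gf; exact: measurable_itv.
have mE := HG GE.
rewrite -integral_cst //.
apply: (@le_trans _ _ (\int[P]_(x in E) ((f1 x - f2 x)%R)%:E)%E).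
  apply: ge0_le_integral => //.
  - by move=> x _; rewrite lee_fin ltW.
  - apply/measurable_EFinP/measurable_funTS.
    exact: sub_measurable_measurable Gf.
  - by move=> x; rewrite /E /= in_itv /= andbT lee_fin.
under eq_integral do rewrite EFinB.
rewrite integralB_EFin //; [|exact: integrableS if1|exact: integrableS if2].
rewrite hf1 // hf2 // leeBlDr ?fin_num_measure //; last exact: measurableI.
rewrite addeC; apply: le_trans (measureU2 _ _ _); last 2 first.
- exact: measurableI.
- exact: measurableD.
apply: le_measure; rewrite ?inE; [exact: measurableI| |].
- by apply: measurableU; [exact: measurableI|exact: measurableD].
- by move=> x [Xx Ex]; have [Yx|nYx] := pselect (Y x); [left|right].
Qed.

End level_set_bound.

Lemma norm_sub_indic_ge_subset (T : Type) (R : realDomainType) (A C : set T)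
    (g : T -> R) (eps : R) :
  [set x | eps <= `|g x - \1_A x|] `<=`
  (g \- \1_C) @^-1` `[eps, +oo[ `|` (\1_C \- g) @^-1` `[eps, +oo[ `|` (A `+` C).
Proof.
move=> x /= Sx; have [AC|nAC] := pselect ((A `+` C) x); first by right.
have eAC : \1_A x = \1_C x :> R.
  rewrite /indic; have [Ax|nAx] := pselect (A x); have [Cx|nCx] := pselect (C x).
  - by rewrite !mem_set.
  - by exfalso; apply: nAC; left.
  - by exfalso; apply: nAC; right.
  - by rewrite !memNset.
left; rewrite /= !in_itv /= !andbT -eAC.
have [ge|lt] := lerP 0 (g x - \1_A x); first by left; rewrite -(ger0_norm ge).
by right; rewrite -opprB -(ltr0_norm lt).
Qed.

Section version_deviation_bound.
Context d (T : measurableType d) (R : realType) (P : probability T R).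
Variables (G : set (set T)) (HG : G `<=` measurable) (sG : sigma_algebra setT G).
Variables (A : set T) (mA : measurable A) (g : T -> R).
Hypothesis gA : cond_exp_version P G (\1_A) g.

Lemma cond_exp_indic_dev_le (C : set T) (eps : R) : G C -> 0 < eps ->
  (P [set x | (eps <= `|g x - \1_A x|)%R] <= ((2 + eps) / eps)%:E * P (A `+` C))%E.
Proof.
move=> GC e0; have mC := HG GC; have [Gg ig hg] := gA.
have mY : measurable (A `+` C) by apply: measurableU; exact: measurableD.
have hgA E : G E -> (\int[P]_(x in E) (g x)%:E = P (A `&` E))%E.
  by move=> GE; rewrite hg // integral_indic //; exact: HG.
have hC E : G E -> (\int[P]_(x in E) (\1_C x)%:E = P (C `&` E))%E.
  by move=> GE; rewrite integral_indic //; exact: HG.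
have SE := @norm_sub_indic_ge_subset _ _ A C g eps.
set Ep := (g \- \1_C) @^-1` `[eps, +oo[; set Em := (\1_C \- g) @^-1` `[eps, +oo[.
have GgC : sub_measurable G (g \- \1_C) := sub_measurableB sG Gg (sub_measurable_indic sG GC).
have GCg : sub_measurable G (\1_C \- g) := sub_measurableB sG (sub_measurable_indic sG GC) Gg.
have GEp : G Ep by apply: GgC; exact: measurable_itv.
have GEm : G Em by apply: GCg; exact: measurable_itv.
have le_setY (D : set T) : D `<=` A `+` C -> measurable D -> (P D <= P (A `+` C))%E.
  by move=> DY mD; apply: le_measure; rewrite ?inE.
have hp : (eps%:E * P Ep <= P (A `+` C))%E.
  apply: le_trans (le_setY _ (@subsetUl _ _ _) (measurableD mA mC)).
  exact: (le_measure_level_setD HG e0 mA mC GgC ig (integrable_indic P mC) hgA hC).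
have hm : (eps%:E * P Em <= P (A `+` C))%E.
  apply: le_trans (le_setY _ (@subsetUr _ _ _) (measurableD mC mA)).
  exact: (le_measure_level_setD HG e0 mC mA GCg (integrable_indic P mC) ig hC hgA).
have mEp := HG GEp; have mEm := HG GEm.
rewrite mulrC EFinM -muleA lee_pdivlMl //.
apply: (@le_trans _ _ (eps%:E * (P Ep + P Em + P (A `+` C))))%E.
  apply: lee_wpmul2l; first by rewrite lee_fin ltW.
  apply: le_trans (le_measure _ _ _ SE) _; rewrite ?inE //.
  - apply: measurable_norm_ge; apply: measurable_funB; last exact: measurable_indic.
    exact: sub_measurable_measurable HG Gg.
  - by apply: measurableU => //; exact: measurableU.
  apply: le_trans (measureU2 _ _ _) _ => //; first exact: measurableU.
  by rewrite leeD2r //; exact: measureU2.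
have -> : ((2 + eps)%:E * P (A `+` C) =
    P (A `+` C) + P (A `+` C) + eps%:E * P (A `+` C))%E.
  have eps0 : (0 <= eps%:E)%E by rewrite lee_fin ltW.
  by rewrite (_ : 2 + eps = 1 + 1 + eps) // !EFinD !ge0_muleDl ?mul1e ?adde_ge0 ?lee01.
rewrite ge0_muleDr ?adde_ge0 // ge0_muleDr //.
by apply: leeD => //; exact: leeD.
Qed.

End version_deviation_bound.

Section null_dominates_cvg.
Context d (T : measurableType d) (R : realType).
Variables (P Q : {finite_measure set T -> \bar R}) (QP : Q `<< P).

Lemma null_dominates_lt (e : R) : 0 < e -> exists2 del : R, 0 < del &
  forall C, measurable C -> (P C < del%:E)%E -> (Q C < e%:E)%E.
Proof.
move=> e0; apply: contrapT => nodel.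
have badF k : exists C : set T,
    [/\ measurable C, (P C < (1 / (2 ^ k.+1)%:R)%:E)%E & (e%:E <= Q C)%E].
  apply: contrapT => nC; apply: nodel.
  exists (1 / (2 ^ k.+1)%:R); first by rewrite divr_gt0.
  move=> C mC PC; rewrite ltNge; apply/negP => QC; apply: nC; by exists C.
have [F hF] := choice badF.
have mF k : measurable (F k) by case: (hF k).
have mL : measurable (lim_sup_set F).
  by apply: bigcap_measurable => // k _; exact: bigcup_measurable.
(* Borel--Cantelli: the [F k] have summable [P]-measure but [Q]-measure at least [e]. *)
have /null_content_dominatesP QPc := QP.
have QL0 : Q (lim_sup_set F) = 0%E.
  apply: QPc mL _; apply: lim_sup_set_cvg0 => //; apply: le_lt_trans (ltry 1).
  apply: le_trans (epsilon_trick0 xpredT ler01).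
  by apply: lee_nneseries => // k _; case: (hF k) => _ /ltW.
suff : (e%:E <= Q (lim_sup_set F))%E by rewrite QL0 lee_fin leNgt e0.
have mUF n : measurable (\bigcup_(k >= n) F k) by exact: bigcup_measurable.
have QUF : (Q (\bigcup_(k >= 0) F k) < +oo)%E by rewrite ltey_eq fin_num_measure.
rewrite -(cvg_lim _ (lim_sup_set_cvg Q F mF QUF)) //.
apply: lime_ge; first by apply/cvg_ex; eexists; exact: lim_sup_set_cvg Q F mF QUF.
apply: nearW => n; case: (hF n) => _ _ /le_trans; apply.
by apply: le_measure; rewrite ?inE //; move=> x Fx; exists n => /=.
Qed.

Lemma null_dominates_cvg0 (D : nat -> set T) : (forall n, measurable (D n)) ->
  (P \o D) @ \oo --> 0%E -> (Q \o D) @ \oo --> 0%E.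
Proof.
move=> mD /fine_cvgP [_ PD0]; apply/fine_cvgP; split.
  by apply: nearW => n; rewrite fin_num_measure.
apply/cvgr0Pnorm_lt => e e0; have [del del0 hdel] := null_dominates_lt e0.
move/cvgr0Pnorm_lt : PD0 => /(_ del del0); apply: filterS => n /=.
rewrite !ger0_norm ?fine_ge0 ?measure_ge0 // => PDn.
rewrite -lte_fin fineK ?fin_num_measure //; apply: hdel => //.
by rewrite -(fineK (fin_num_measure P _ (mD n))) lte_fin.
Qed.

End null_dominates_cvg.

Lemma setY_gt_half_subset d (T : measurableType d) (R : realType)
    (A : set T) (h : T -> R) :
  A `+` (h @^-1` `]2^-1, +oo[) `<=` [set x | 2^-1 <= `|h x - \1_A x|].
Proof.
move=> x [[Ax /= nhx]|[/= hx nAx]]; rewrite /indic.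
- rewrite mem_set //; move: nhx; rewrite in_itv /= andbT => /negP; rewrite -leNgt => hx.
  rewrite ler0_norm; last by rewrite subr_le0 (le_trans hx) // invf_le1 // ler1n.
  by rewrite opprB; lra.
- rewrite memNset // subr0; move: hx; rewrite in_itv /= andbT => hx.
  by rewrite ltW // (lt_le_trans hx) // ler_norm.
Qed.

Section weak_cvg_dominated.
Context d (T : measurableType d) (R : realType).

Lemma weak_cvg_sf_dominated (P Q : probability T R) (B : nat -> set (set T)) :
  Q `<< P -> (forall n, B n `<=` measurable) ->
  (forall n, sigma_algebra setT (B n)) ->
  weak_cvg_sf P B -> weak_cvg_sf Q B.
Proof.
move=> QP HB sB wP A BA g gQ; have mA := HB 0%N _ BA.
have [h hP] := choice (fun n => cond_exp_indic_exists P (HB n) (sB n) mA).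
pose C n := h n @^-1` `]2^-1, +oo[.
have BC n : B n (C n) by case: (hP n) => Bh _ _; apply: Bh; exact: measurable_itv.
have mY n : measurable (A `+` C n).
  by apply: measurableU; apply: measurableD => //; exact: HB.
have PY : (P \o (fun n => A `+` C n)) @ \oo --> 0%E.
  apply: (squeeze_cvge _ (cvg_cst 0%E) (wP A BA h hP 2^-1 _)); last by rewrite invr_gt0.
  apply: nearW => n; rewrite measure_ge0 /=; apply: le_measure; rewrite ?inE //.
    apply: measurable_norm_ge; apply: measurable_funB; last exact: measurable_indic.
    by case: (hP n) => Gh _ _; exact: sub_measurable_measurable (HB n) Gh.
  exact: setY_gt_half_subset.
move=> eps e0; have QY := null_dominates_cvg0 QP mY PY.
have cQY : ((fun n => ((2 + eps) / eps)%:E * Q (A `+` C n)) @ \oo --> 0)%E.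
  by rewrite -[X in _ --> X](mule0 ((2 + eps) / eps)%:E); exact: cvgeZl.
apply: (squeeze_cvge _ (cvg_cst 0%E) cQY); apply: nearW => n; rewrite measure_ge0 /=.
exact: (cond_exp_indic_dev_le (HB n) (sB n) mA (gQ n) (BC n) e0).
Qed.

End weak_cvg_dominated.

Theorem proposition4p3 (d : measure_display) (T : measurableType d)
  (R : realType) (P Q : probability T R) (B : nat -> set (set T)) :
  equiv_prob P Q ->
  (forall n, sigma_subfield P (B n)) ->
  (weak_cvg_sf P B <-> weak_cvg_sf Q B).
Proof.
move=> PQ sfB.
have HB n : B n `<=` measurable by case: (sfB n).
have sB n : sigma_algebra setT (B n) by case: (sfB n).
have QllP : Q `<< P by apply/null_content_dominatesP => C mC /(PQ C mC).
have PllQ : P `<< Q by apply/null_content_dominatesP => C mC /(PQ C mC).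
by split; exact: weak_cvg_sf_dominated.
Qed.
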